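(* Let $N\ge 1$, let $\boldsymbol{\theta}_1,\dots,\boldsymbol{\theta}_N\in\mathbb{R}^d$, and let $\boldsymbol{C}\in\mathbb{R}^{N\times N}$ be the squared Euclidean distance matrix $\boldsymbol{C}(r,s)=\|\boldsymbol{\theta}_r-\boldsymbol{\theta}_s\|_2^2$. Fix $\varepsilon>0$, $\alpha>0$, $\boldsymbol{a}\in\mathbb{R}^N\setminus\{\boldsymbol{0}\}$ and $\boldsymbol{\zeta}\in\Delta^{N-1}$. Let $\boldsymbol{\Phi}(\boldsymbol{\mu}):=\langle \boldsymbol{a},\boldsymbol{\mu}\rangle$ for $\boldsymbol{\mu}\in\Delta^{N-1}$, and let $\boldsymbol{\Gamma}:=\exp(-\boldsymbol{C}/(2\varepsilon))$ (entrywise exponential). Then the entropy-regularized Wasserstein proximal operator $$\mathrm{prox}^{W_\varepsilon}_{\frac{1}{\alpha}\boldsymbol{\Phi}}(\boldsymbol{\zeta}) := \underset{\boldsymbol{\mu}\in\Delta^{N-1}}{\arg\inf}\left\{\min_{\boldsymbol{M}\in\Pi_N(\boldsymbol{\mu},\boldsymbol{\zeta})}\left\langle \tfrac12\boldsymbol{C}+\varepsilon\log\boldsymbol{M},\,\boldsymbol{M}\right\rangle+\frac{1}{\alpha}\boldsymbol{\Phi}(\boldsymbol{\mu})\right\}$$ is given by $$\mathrm{prox}^{W_\varepsilon}_{\frac{1}{\alpha}\boldsymbol{\Phi}}(\boldsymbol{\zeta}) = \exp\!\left(-\tfrac{1}{\alpha\varepsilon}\boldsymbol{a}\right)\odot\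left(\boldsymbol{\Gamma}^{\top}\left(\boldsymbol{\zeta}\oslash\left(\boldsymbol{\Gamma}\exp\!\left(-\tfrac{1}{\alpha\varepsilon}\boldsymbol{a}\right)\right)\right)\right).$$
   Context: $\Delta^{N-1}:=\{\boldsymbol{x}\in\mathbb{R}^N:\boldsymbol{x}\ge\boldsymbol{0},\ \boldsymbol{1}^\top\boldsymbol{x}=1\}$ is the probability simplex. For $\boldsymbol{\xi},\boldsymbol{\eta}\in\Delta^{N-1}$, $\Pi_N(\boldsymbol{\xi},\boldsymbol{\eta}):=\{\boldsymbol{M}\in\mathbb{R}^{N\times N}: \boldsymbol{M}\ge\boldsymbol{0}\text{ entrywise},\ \boldsymbol{M}\boldsymbol{1}=\boldsymbol{\xi},\ \boldsymbol{M}^\top\boldsymbol{1}=\boldsymbol{\eta}\}$, where $\boldsymbol{1}$ is the all-ones vector. For matrices, $\langle \boldsymbol{A},\boldsymbol{B}\rangle=\sum_{r,s}\boldsymbol{A}(r,s)\boldsymbol{B}(r,s)$; $\log\boldsymbol{M}$ and $\exp(\cdot)$ act entrywise, with the convention $0\log 0=0$. The symbols $\odot$ and $\oslash$ denote entrywise (Hadamard) multiplication and division of vectors. *)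

From HB Require Import structures.
From mathcomp Require Import all_boot all_order all_algebra.
From mathcomp Require Import all_classical all_reals all_analysis.
Set Implicit Arguments. Unset Strict Implicit. Unset Printing Implicit Defensive.
Import Order.TTheory GRing.Theory Num.Theory.
Local Open Scope classical_set_scope.
Local Open Scope ring_scope.

Definition simplex (R : realType) (N : nat) : set ('I_N -> R) :=
  [set x | (forall i, 0 <= x i) /\ \sum_(i < N) x i = 1].

Definition couplings (R : realType) (N : nat) (xi eta : 'I_N -> R)
  : set 'M[R]_N :=
  [set M | (forall r s, 0 <= M r s)
         /\ (forall r, \sum_(s < N) M r s = xi r)
         /\ (forall s, \sum_(r < N) M r s = eta s)].

Definition xlogx (R : realType) (x : R) : R := if x == 0 then 0 else x * ln x.

Definition sqdist_mx (R : realType) (N d : nat) (theta : 'I_N -> 'I_d -> R)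
  : 'M[R]_N :=
  \matrix_(r, s) \sum_(k < d) (theta r k - theta s k) ^+ 2.

Definition ent_cost (R : realType) (N : nat) (C : 'M[R]_N) (eps : R)
  (M : 'M[R]_N) : R :=
  \sum_(r < N) \sum_(s < N) (C r s / 2 * M r s + eps * xlogx (M r s)).

(* min_{M in Pi(mu,zeta)} <C/2 + eps log M, M>  (the infimum, attained) *)
Definition ent_ot (R : realType) (N : nat) (C : 'M[R]_N) (eps : R)
  (mu zeta : 'I_N -> R) : R :=
  inf [set ent_cost C eps M | M in couplings mu zeta].

Definition prox_obj (R : realType) (N : nat) (C : 'M[R]_N) (eps alpha : R)
  (Phi : ('I_N -> R) -> R) (zeta mu : 'I_N -> R) : R :=
  ent_ot C eps mu zeta + alpha^-1 * Phi mu.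

Definition prox_argmin (R : realType) (N : nat) (C : 'M[R]_N) (eps alpha : R)
  (Phi : ('I_N -> R) -> R) (zeta : 'I_N -> R) : set ('I_N -> R) :=
  [set mu | simplex mu /\
     forall nu, simplex nu ->
       prox_obj C eps alpha Phi zeta mu <= prox_obj C eps alpha Phi zeta nu].

Definition prox_formula (R : realType) (N : nat) (C : 'M[R]_N) (eps alpha : R)
  (a zeta : 'I_N -> R) : 'I_N -> R :=
  let Gamma := \matrix_(r, s) expR (- C r s / (2 * eps)) in
  let w := fun i => expR (- (alpha * eps)^-1 * a i) in
  let Gw := fun r => \sum_(s < N) Gamma r s * w s in
  fun s => w s * \sum_(r < N) Gamma r s * (zeta r / Gw r).

From HB Require Import structures.
From mathcomp Require Import all_boot all_order all_algebra.
From mathcomp Require Import all_classical all_reals all_analysis.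
From mathcomp Require Import ring lra.
Import Order.TTheory GRing.Theory Num.Theory.
Local Open Scope classical_set_scope.
Local Open Scope ring_scope.

(* Let w := exp(-a/(alpha eps)) and
   M* := diag(w) Gamma^T diag(zeta ./ (Gamma w))   ([opt_coupling]),
   a coupling of the closed-form mu and zeta.  For any coupling M of
   (nu, zeta) put K_nu := diag(nu ./ mu) M*   ([tilted]), the rescaling of M*
   to first marginal nu.  Expanding ln K_nu entrywise gives the exact identity
     <C/2 + eps ln M, M> + <a, nu>/alpha
       = V + eps KL(nu | mu) + eps KL(M | K_nu),
   with V independent of nu and M and KL(p | q) = sum p ln(p/q) - p + q.  Both
   relative entropies are nonnegative and vanish at nu = mu, M = M*, so the
   proximal objective is at least V + eps KL(nu | mu) and equals V at mu; a
   minimizer therefore has KL(nu | mu) = 0, i.e. nu = mu. *)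

Section RelativeEntropy.
Context {R : realType}.

Lemma xlogxE (x : R) : xlogx x = x * ln x.
Proof. by rewrite /xlogx; case: eqP => [->|]; rewrite ?mul0r. Qed.

Lemma ln_le_subr1 (z : R) : 0 < z -> ln z <= z - 1.
Proof. by move=> z0; have := expR_ge1Dx (ln z); rewrite lnK ?posrE //; lra. Qed.

Lemma ln_lt_subr1 (z : R) : 0 < z -> z != 1 -> ln z < z - 1.
Proof.
move=> z0 z1; have := @expR_gt1Dx R (ln z); rewrite lnK ?posrE // ln_eq0 // z1.
by move=> /(_ isT); lra.
Qed.

Definition relent_term (p q : R) : R := xlogx p - p * ln q - p + q.

Lemma relent_termE (p q : R) : 0 < p -> 0 < q ->
  relent_term p q = p * (q / p - 1 - ln (q / p)).
Proof.
move=> p0 q0; rewrite /relent_term xlogxE ln_div ?posrE //.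
by field; rewrite gt_eqF.
Qed.

Lemma relent_termxx (p : R) : relent_term p p = 0.
Proof. by rewrite /relent_term xlogxE; ring. Qed.

Lemma relent_term0l (q : R) : relent_term 0 q = q.
Proof. by rewrite /relent_term xlogxE !mul0r; ring. Qed.

Lemma relent_term_ge0 (p q : R) : 0 <= p -> 0 <= q -> (0 < p -> 0 < q) ->
  0 <= relent_term p q.
Proof.
rewrite le0r => /predU1P[->|p0] q0 /(_ _); first by rewrite relent_term0l.
move=> /(_ p0) {}q0; rewrite relent_termE //; apply: mulr_ge0; first exact: ltW.
by rewrite subr_ge0 ln_le_subr1 // divr_gt0.
Qed.

Lemma relent_term_eq0 (p q : R) : 0 <= p -> 0 < q -> relent_term p q = 0 ->
  p = q.
Proof.
rewrite le0r => /predU1P[->|p0] q0.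
  by rewrite relent_term0l => /eqP; rewrite gt_eqF.
have [/divr1_eq -> //|qp] := eqVneq (q / p) 1.
rewrite relent_termE // => /eqP; rewrite mulf_eq0 gt_eqF //= subr_eq0.
by rewrite gt_eqF // ln_lt_subr1 // divr_gt0.
Qed.

Context {I : finType}.
Implicit Types p q : I -> R.

Definition relent p q : R := \sum_i relent_term (p i) (q i).

Lemma relentxx p : relent p p = 0.
Proof. by rewrite /relent big1 // => i _; exact: relent_termxx. Qed.

Lemma relent_ge0 p q :
  (forall i, 0 <= p i) -> (forall i, 0 < q i) -> 0 <= relent p q.
Proof.
move=> p0 q0; apply: sumr_ge0 => i _.
exact: relent_term_ge0 (p0 i) (ltW (q0 i)) (fun _ => q0 i).
Qed.

Lemma relent_eq0 p q :
  (forall i, 0 <= p i) -> (forall i, 0 < q i) -> relent p q = 0 -> p = q.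
Proof.
move=> p0 q0 pq0; apply/funext => i; apply: relent_term_eq0 (p0 i) (q0 i) _.
apply: psumr_eq0P pq0 i isT => j _.
exact: relent_term_ge0 (p0 j) (ltW (q0 j)) (fun _ => q0 j).
Qed.

End RelativeEntropy.

Section Couplings.
Variables (R : realType) (N : nat).
Implicit Types (nu eta : 'I_N -> R) (M : 'M[R]_N).

Lemma couplings_gt0 nu eta M r s : couplings nu eta M -> 0 < M r s ->
  0 < nu r /\ 0 < eta s.
Proof.
move=> [M0 [<- <-]] Mrs; split.
- by rewrite (bigD1 s) //= ltr_pwDl // sumr_ge0.
- by rewrite (bigD1 r) //= ltr_pwDl // sumr_ge0.
Qed.

Lemma couplings_simplexl nu eta M : couplings nu eta M -> simplex eta ->
  simplex nu.
Proof.
move=> [M0 [Mrow Mcol]] [_ eta1]; split=> [r|].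
  by rewrite -Mrow sumr_ge0.
under eq_bigr do rewrite -Mrow.
by rewrite exchange_big /=; under eq_bigr do rewrite Mcol.
Qed.

Lemma couplings_product nu eta : simplex nu -> simplex eta ->
  couplings nu eta (\matrix_(r, s) (nu r * eta s)).
Proof.
move=> [nu0 nu1] [eta0 eta1]; split; [|split].
- by move=> r s; rewrite mxE mulr_ge0.
- by move=> r; under eq_bigr do rewrite mxE; rewrite -mulr_sumr eta1 mulr1.
- by move=> s; under eq_bigr do rewrite mxE; rewrite -mulr_suml nu1 mul1r.
Qed.

End Couplings.

Arguments couplings_gt0 {R N nu eta M} r s.
Arguments couplings_simplexl {R N nu eta M}.

Section EntropicWassersteinProx.
Variables (R : realType) (N : nat) (C : 'M[R]_N) (eps alpha : R).
Variables (a zeta : 'I_N -> R).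
Hypothesis C_sym : forall r s, C s r = C r s.
Hypotheses (eps_gt0 : 0 < eps) (alpha_gt0 : 0 < alpha).
Hypothesis zeta_simplex : simplex zeta.

Let gibbs r s := expR (- C r s / (2 * eps)).
Let weight r := expR (- (alpha * eps)^-1 * a r).
Let gibbs_weight r := \sum_(s < N) gibbs r s * weight s.
Let log_scaling s := ln (zeta s) - ln (gibbs_weight s).
Let mu := prox_formula C eps alpha a zeta.
Let opt_coupling r s := weight r * (gibbs s r * (zeta s / gibbs_weight s)).
Let opt_value := eps * \sum_(s < N) zeta s * log_scaling s.
Let Phi nu := \sum_(r < N) a r * nu r.

Lemma gibbs_weight_gt0 r : 0 < gibbs_weight r.
Proof.
rewrite /gibbs_weight (bigD1 r) //= ltr_pwDl ?mulr_gt0 ?expR_gt0 //.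
by apply: sumr_ge0 => s _; rewrite mulr_ge0 ?expR_ge0.
Qed.

Lemma opt_coupling_ge0 r s : 0 <= opt_coupling r s.
Proof.
rewrite /opt_coupling !mulr_ge0 ?expR_ge0 ?invr_ge0 ?zeta_simplex.1 //.
exact/ltW/gibbs_weight_gt0.
Qed.

Lemma opt_coupling_gt0 r s : 0 < zeta s -> 0 < opt_coupling r s.
Proof.
by move=> zeta_s; rewrite !mulr_gt0 ?expR_gt0 ?invr_gt0 ?gibbs_weight_gt0.
Qed.

Lemma ln_opt_coupling r s : 0 < zeta s -> ln (opt_coupling r s) =
  - (alpha * eps)^-1 * a r - C r s / (2 * eps) + log_scaling s.
Proof.
move=> zeta_s; have Gw_s := gibbs_weight_gt0 s.
rewrite /opt_coupling !lnM ?lnV ?posrE ?mulr_gt0 ?invr_gt0 ?expR_gt0 //.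
by rewrite /weight /gibbs !expRK C_sym /log_scaling; ring.
Qed.

Lemma sum_opt_coupling_row r : \sum_(s < N) opt_coupling r s = mu r.
Proof.
rewrite -mulr_sumr /mu /prox_formula; congr (_ * _); apply: eq_bigr => s _.
by rewrite mxE; congr (_ * (_ / _)); apply: eq_bigr => t _; rewrite mxE.
Qed.

Lemma sum_opt_coupling_col s : \sum_(r < N) opt_coupling r s = zeta s.
Proof.
under eq_bigr do rewrite /opt_coupling mulrA [weight _ * _]mulrC.
by rewrite -mulr_suml mulrCA mulfV ?mulr1 // gt_eqF // gibbs_weight_gt0.
Qed.

Lemma opt_coupling_couplings :
  couplings mu zeta (\matrix_(r, s) opt_coupling r s).
Proof.
split; [|split] => [r s|r|s]; first by rewrite mxE opt_coupling_ge0.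
- by under eq_bigr do rewrite mxE; exact: sum_opt_coupling_row.
- by under eq_bigr do rewrite mxE; exact: sum_opt_coupling_col.
Qed.

Lemma prox_formula_simplex : simplex mu.
Proof. exact: couplings_simplexl opt_coupling_couplings zeta_simplex. Qed.

Lemma prox_formula_gt0 r : 0 < mu r.
Proof.
have [s /andP[_ zeta_s]] : exists s, true && (0 < zeta s).
  apply: psumr_neq0P => [s _|]; first exact: zeta_simplex.1.
  by rewrite zeta_simplex.2; apply/eqP; exact: oner_neq0.
have := couplings_gt0 r s opt_coupling_couplings; rewrite mxE.
by case/(_ (opt_coupling_gt0 r s zeta_s)).
Qed.

Section Decomposition.
Variables (nu : 'I_N -> R) (M : 'M[R]_N).
Hypothesis M_coupling : couplings nu zeta M.

Let tilted r s := nu r / mu r * opt_coupling r s.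

Lemma tilted_ge0 r s : 0 <= tilted r s.
Proof.
have [nu_ge0 _] := couplings_simplexl M_coupling zeta_simplex.
by rewrite mulr_ge0 ?divr_ge0 ?opt_coupling_ge0 // ltW ?prox_formula_gt0.
Qed.

Lemma sum_tilted_row r : \sum_(s < N) tilted r s = nu r.
Proof.
by rewrite -mulr_sumr sum_opt_coupling_row divfK // gt_eqF ?prox_formula_gt0.
Qed.

Lemma mul_ln_tilted r s : M r s * ln (tilted r s) = M r s *
  (- (alpha * eps)^-1 * a r - C r s / (2 * eps) + log_scaling s
   + (ln (nu r) - ln (mu r))).
Proof.
have [->|M_rs] := eqVneq (M r s) 0; first by rewrite !mul0r.
have [M_ge0 _] := M_coupling.
have [nu_r zeta_s] : 0 < nu r /\ 0 < zeta s.
  by apply: couplings_gt0 M_coupling _; rewrite lt0r M_rs M_ge0.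
rewrite /tilted lnM ?posrE ?divr_gt0 ?prox_formula_gt0 ?opt_coupling_gt0 //.
rewrite ln_div ?posrE ?prox_formula_gt0 // ln_opt_coupling //.
by congr (_ * _); ring.
Qed.

Lemma ent_cost_entryE r s :
  C r s / 2 * M r s + eps * xlogx (M r s) =
  eps * relent_term (M r s) (tilted r s) - a r / alpha * M r s
  + eps * (M r s * log_scaling s) + eps * (M r s * (ln (nu r) - ln (mu r)))
  + eps * (M r s - tilted r s).
Proof. by rewrite /relent_term mul_ln_tilted; field; rewrite !gt_eqF. Qed.

Lemma ent_cost_decomposition :
  ent_cost C eps M + alpha^-1 * Phi nu =
  opt_value + eps * relent nu mu
  + eps * \sum_(r < N) \sum_(s < N) relent_term (M r s) (tilted r s).
Proof.
have [_ [M_row M_col]] := M_coupling.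
have [_ nu1] := couplings_simplexl M_coupling zeta_simplex.
have relentE : relent nu mu = \sum_(r < N) nu r * (ln (nu r) - ln (mu r)).
  rewrite /relent; under eq_bigr do rewrite /relent_term xlogxE -mulrBr.
  by rewrite big_split sumrB /= nu1 prox_formula_simplex.2 subrK.
have row_sum r : \sum_(s < N) (C r s / 2 * M r s + eps * xlogx (M r s)) =
    eps * \sum_(s < N) relent_term (M r s) (tilted r s) - a r / alpha * nu r
    + eps * \sum_(s < N) M r s * log_scaling s
    + eps * (nu r * (ln (nu r) - ln (mu r))).
  set T := \sum_(s < N) relent_term _ _.
  under eq_bigr do rewrite ent_cost_entryE.
  rewrite !big_split /= sumrN -!mulr_sumr -!mulr_suml sumrB M_row.
  by rewrite sum_tilted_row -/T subrr mulr0 addr0.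
have transport : \sum_(r < N) \sum_(s < N) M r s * log_scaling s =
    \sum_(s < N) zeta s * log_scaling s.
  by rewrite exchange_big; apply: eq_bigr => s _; rewrite -mulr_suml M_col.
rewrite /ent_cost relentE; set D := \sum_(r < N) \sum_(s < N) relent_term _ _.
under eq_bigr do rewrite row_sum.
have potential : \sum_(r < N) a r / alpha * nu r = alpha^-1 * Phi nu.
  by rewrite mulr_sumr; apply: eq_bigr => r _; rewrite mulrAC mulrC.
rewrite !big_split /= sumrN -!mulr_sumr -/D transport potential /opt_value.
ring.
Qed.

Lemma ent_cost_lower_bound :
  opt_value + eps * relent nu mu <= ent_cost C eps M + alpha^-1 * Phi nu.
Proof.
rewrite ent_cost_decomposition lerDl; apply: mulr_ge0; first exact: ltW.
have [M_ge0 _] := M_coupling.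
apply: sumr_ge0 => r _; apply: sumr_ge0 => s _.
apply: relent_term_ge0 (M_ge0 r s) (tilted_ge0 r s) _ => M_rs.
have [nu_r zeta_s] := couplings_gt0 r s M_coupling M_rs.
by rewrite mulr_gt0 ?divr_gt0 ?prox_formula_gt0 ?opt_coupling_gt0.
Qed.

End Decomposition.

Lemma ent_cost_opt_coupling :
  ent_cost C eps (\matrix_(r, s) opt_coupling r s)
  + alpha^-1 * Phi mu = opt_value.
Proof.
rewrite (ent_cost_decomposition _ _ opt_coupling_couplings) relentxx.
rewrite mulr0 addr0.
rewrite big1 ?mulr0 ?addr0 // => r _; rewrite big1 // => s _.
by rewrite mxE divff ?mul1r ?relent_termxx // gt_eqF ?prox_formula_gt0.
Qed.

Lemma prox_obj_ge nu : simplex nu ->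
  opt_value + eps * relent nu mu <= prox_obj C eps alpha Phi zeta nu.
Proof.
move=> nu_simplex; rewrite /prox_obj -lerBlDr; apply: lb_le_inf.
  exists (ent_cost C eps (\matrix_(r, s) (nu r * zeta s))).
  by exists (\matrix_(r, s) (nu r * zeta s)) => //; exact: couplings_product.
by move=> _ [M M_coupling <-]; rewrite lerBlDr; exact: ent_cost_lower_bound.
Qed.

Lemma prox_obj_prox_formula : prox_obj C eps alpha Phi zeta mu <= opt_value.
Proof.
rewrite /prox_obj -ent_cost_opt_coupling lerD2r; apply: ge_inf.
  exists (opt_value - alpha^-1 * Phi mu) => _ [M M_coupling <-].
  rewrite lerBlDr; have := ent_cost_lower_bound _ _ M_coupling.
  by rewrite relentxx mulr0 addr0.
exists (\matrix_(r, s) opt_coupling r s) => //.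
exact: opt_coupling_couplings.
Qed.

Theorem prox_argmin_prox_formula :
  prox_argmin C eps alpha Phi zeta = [set mu].
Proof.
apply/seteqP; split => [nu [nu_simplex nu_min]|_ ->] /=.
  have := le_trans (prox_obj_ge _ nu_simplex) (nu_min _ prox_formula_simplex).
  move=> /le_trans /(_ prox_obj_prox_formula).
  rewrite gerDl (pmulr_rle0 _ eps_gt0) => le0.
  have ge0 : 0 <= relent nu mu.
    exact: relent_ge0 nu_simplex.1 prox_formula_gt0.
  apply: relent_eq0 nu_simplex.1 prox_formula_gt0 _.
  by apply/eqP; rewrite eq_le le0.
split=> [|nu nu_simplex]; first exact: prox_formula_simplex.
apply: le_trans prox_obj_prox_formula (le_trans _ (prox_obj_ge _ nu_simplex)).
rewrite lerDl; apply: mulr_ge0; first exact: ltW.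
exact: relent_ge0 nu_simplex.1 prox_formula_gt0.
Qed.

End EntropicWassersteinProx.

Lemma sqdist_mx_sym (R : realType) (N d : nat) (theta : 'I_N -> 'I_d -> R)
  (r s : 'I_N) : sqdist_mx theta s r = sqdist_mx theta r s.
Proof. by rewrite !mxE; apply: eq_bigr => k _; rewrite -sqrrN opprB. Qed.

(* The closed form holds for every [a]; [0 < N] follows from [simplex zeta]. *)
Theorem theorem1 (R : realType) (N d : nat) (theta : 'I_N -> 'I_d -> R)
  (eps alpha : R) (a zeta : 'I_N -> R) :
  (0 < N)%N -> 0 < eps -> 0 < alpha -> (exists i, a i != 0) ->
  simplex zeta ->
  prox_argmin (sqdist_mx theta) eps alpha
    (fun mu => \sum_(i < N) a i * mu i) zeta
  = [set prox_formula (sqdist_mx theta) eps alpha a zeta].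
Proof.
move=> _ eps_gt0 alpha_gt0 _ zeta_simplex.
by apply: prox_argmin_prox_formula => //; exact: sqdist_mx_sym.
Qed.
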